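(* Let $\Lambda$ be a split-by-nilpotent extension of a finite dimensional algebra $A$. Then the triangle functor $-\otimes_A\Lambda:K^b(\mathrm{proj}\,A)\to K^b(\mathrm{proj}\,\Lambda)$ sends indecomposable objects to indecomposable objects.
   Context: $\Lambda$ is a split-by-nilpotent extension of $A$: there is a surjective algebra homomorphism $\pi:\Lambda\to A$ with nilpotent kernel and an algebra homomorphism $\iota:A\to\Lambda$ with $\pi\circ\iota=\mathrm{id}_A$; $\Lambda$ is a left $A$-module via $\iota$ and $A$ a left $\Lambda$-module via $\pi$. $K^b(\mathrm{proj}\,B)$ is the bounded homotopy category of finitely generated projective right $B$-modules. *)

From HB Require Import structures.
From mathcomp Require Import all_boot all_order all_algebra all_field.
Set Implicit Arguments. Unset Strict Implicit. Unset Printing Implicit Defensive.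
Import GRing.Theory.
Local Open Scope ring_scope.

Definition nilpotent_ideal (R : nzRingType) (I : pred R) : Prop :=
  exists m : nat, forall s : seq R,
    size s = m -> all I s -> \prod_(x <- s) x = 0.

Definition split_by_nilpotent (F : fieldType) (A L : falgType F)
    (pi : {lrmorphism L -> A}) (iota : {lrmorphism A -> L}) : Prop :=
  [/\ (forall a : A, exists x : L, pi x = a),
      nilpotent_ideal [pred x : L | pi x == 0]
    & cancel iota pi].

(* The bounded homotopy category K^b(proj R) of f.g. projective right   *)
(* R-modules.  A f.g. projective right R-module is modelled as e R^n    *)
(* (column vectors, R acting on the right) for an idempotent            *)
(* e in M_n(R); Hom_R(e R^n, f R^m) = { X in M_(m,n)(R) | f X e = X },  *)
(* acting by left multiplication.  Complexes are Z-indexed, cohomological *)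
(* (d_i : C_i -> C_(i+1)).                                              *)

Record cx (R : nzRingType) := Cx {
  cdim : int -> nat;
  cidem : forall i : int, 'M[R]_(cdim i);
  cdiff : forall i : int, 'M[R]_(cdim (i + 1), cdim i)
}.

Definition is_bcx (R : nzRingType) (C : cx R) : Prop :=
  [/\ forall i, cidem C i *m cidem C i = cidem C i,
      forall i, cdiff C i = cidem C (i + 1) *m cdiff C i *m cidem C i,
      forall i, cdiff C (i + 1) *m cdiff C i = 0
    & exists a b : int, forall i, (i < a)%R \/ (b < i)%R -> cidem C i = 0].

Definition cxhom (R : nzRingType) (C D : cx R) :=
  forall i : int, 'M[R]_(cdim D i, cdim C i).

Definition is_chain_map (R : nzRingType) (C D : cx R) (f : cxhom C D) : Prop :=
  (forall i, f i = cidem D i *m f i *m cidem C i) /\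
  (forall i, f (i + 1) *m cdiff C i = cdiff D i *m f i).

Definition cxid (R : nzRingType) (C : cx R) : cxhom C C := fun i => cidem C i.

Definition cxcomp (R : nzRingType) (C D E : cx R) (g : cxhom D E) (f : cxhom C D)
  : cxhom C E := fun i => g i *m f i.

Definition cxadd (R : nzRingType) (C D : cx R) (f g : cxhom C D) : cxhom C D :=
  fun i => f i + g i.

Definition cxzero (R : nzRingType) (C D : cx R) : cxhom C D := fun i => 0.

Definition homotopic (R : nzRingType) (C D : cx R) (f g : cxhom C D) : Prop :=
  exists h : forall i : int, 'M[R]_(cdim D i, cdim C (i + 1)),
    (forall i, h i = cidem D i *m h i *m cidem C (i + 1)) /\
    (forall i, f (i + 1) - g (i + 1) = cdiff D i *m h i + h (i + 1) *m cdiff C (i + 1)).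

Definition kb_zero (R : nzRingType) (C : cx R) : Prop :=
  homotopic (cxid C) (cxzero C C).

Definition kb_biproduct (R : nzRingType) (C D1 D2 : cx R) : Prop :=
  exists (i1 : cxhom D1 C) (i2 : cxhom D2 C) (p1 : cxhom C D1) (p2 : cxhom C D2),
    [/\ is_chain_map i1, is_chain_map i2, is_chain_map p1 & is_chain_map p2] /\
    [/\ homotopic (cxcomp p1 i1) (cxid D1),
        homotopic (cxcomp p2 i2) (cxid D2),
        homotopic (cxcomp p1 i2) (cxzero D2 D1),
        homotopic (cxcomp p2 i1) (cxzero D1 D2)
      & homotopic (cxadd (cxcomp i1 p1) (cxcomp i2 p2)) (cxid C)].

Definition kb_indecomposable (R : nzRingType) (C : cx R) : Prop :=
  is_bcx C /\ ~ kb_zero C /\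
  forall D1 D2 : cx R, is_bcx D1 -> is_bcx D2 ->
    kb_biproduct C D1 D2 -> kb_zero D1 \/ kb_zero D2.

(* The functor - (x)_A Lambda on objects: (e A^n) (x)_A Lambda = iota(e) Lambda^n,
   and on morphisms/differentials X |-> iota(X). *)
Definition tensor_cx (A L : nzRingType) (iota : A -> L) (C : cx A) : cx L :=
  @Cx L (cdim C) (fun i => map_mx iota (cidem C i)) (fun i => map_mx iota (cdiff C i)).

From HB Require Import structures.
From mathcomp Require Import all_boot all_order all_algebra all_field.
From Stdlib Require Import FunctionalExtensionality.
Set Implicit Arguments. Unset Strict Implicit. Unset Printing Implicit Defensive.
Import GRing.Theory.
Local Open Scope ring_scope.

(* As [pi \o iota = id], a splitting
   D1 (+) D2 of [C (x) Lambda] gives back, after [- (x)_Lambda A], a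
   splitting of C, so some summand D becomes null-homotopic over A.  A
   contraction of [D (x)_Lambda A] lifts via [iota] to a map h on D with
   [dh + hd = 1 - U], where U has entries in the nilpotent ideal [ker pi];
   U commutes with d and is nilpotent, so [h (1 + U + ... + U^(m-1))] is a
   contraction of D. *)

Section TensorFunctor.
Variables (R S : nzRingType) (f : {rmorphism R -> S}).

Lemma tensor_cx_bcx (C : cx R) : is_bcx C -> is_bcx (tensor_cx f C).
Proof.
move=> [idemC diffC ddC [a [b boundC]]]; split => /=.
- by move=> i; rewrite -map_mxM idemC.
- by move=> i; rewrite -!map_mxM -diffC.
- by move=> i; rewrite -map_mxM ddC map_mx0.
- by exists a, b => i out_i; rewrite boundC // map_mx0.
Qed.

Lemma tensor_cx_chain_map (C D : cx R) (g : cxhom C D) :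
  is_chain_map g ->
  is_chain_map (C := tensor_cx f C) (D := tensor_cx f D) (fun i => map_mx f (g i)).
Proof.
move=> [cornerg commg]; split => i /=.
- by rewrite -!map_mxM -cornerg.
- by rewrite -!map_mxM commg.
Qed.

Lemma tensor_cx_homotopic (C D : cx R) (g1 g2 : cxhom C D)
    (g1' g2' : cxhom (tensor_cx f C) (tensor_cx f D)) :
  (forall i, map_mx f (g1 i) = g1' i) -> (forall i, map_mx f (g2 i) = g2' i) ->
  homotopic g1 g2 -> homotopic g1' g2'.
Proof.
move=> fg1 fg2 [h [cornerh htpy]].
exists (fun i => map_mx f (h i)); split => i /=.
- by rewrite -!map_mxM -cornerh.
- by rewrite -fg1 -fg2 -map_mxB htpy map_mxD !map_mxM.
Qed.

Lemma tensor_cx_kb_zero (C : cx R) : kb_zero C -> kb_zero (tensor_cx f C).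
Proof. by apply: tensor_cx_homotopic => // i; rewrite map_mx0. Qed.

Lemma tensor_cx_kb_biproduct (C D1 D2 : cx R) :
  kb_biproduct C D1 D2 ->
  kb_biproduct (tensor_cx f C) (tensor_cx f D1) (tensor_cx f D2).
Proof.
move=> [i1 [i2 [p1 [p2 [[ci1 ci2 cp1 cp2] [h11 h22 h21 h12 hsum]]]]]].
exists (fun i => map_mx f (i1 i)), (fun i => map_mx f (i2 i)),
       (fun i => map_mx f (p1 i)), (fun i => map_mx f (p2 i)).
split; first by split; apply: tensor_cx_chain_map.
split; [move: h11 | move: h22 | move: h21 | move: h12 | move: hsum];
  by apply: tensor_cx_homotopic => i;
     rewrite /cxcomp /cxadd /cxzero ?map_mxD ?map_mxM ?map_mx0.
Qed.

End TensorFunctor.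

Lemma tensor_cxK (R S : nzRingType) (pi : {rmorphism R -> S})
    (iota : {rmorphism S -> R}) :
  cancel iota pi -> cancel (tensor_cx iota) (tensor_cx pi).
Proof.
move=> iotaK [n e d]; rewrite /tensor_cx /=.
by congr Cx; apply: functional_extensionality_dep => i;
   rewrite -map_mx_comp map_mx_id.
Qed.

Lemma exp_mx_nilpotent_entries (R : nzRingType) (I : pred R) (m : nat) :
  (forall s : seq R, size s = m -> all I s -> \prod_(x <- s) x = 0) ->
  forall n (M : 'M[R]_n), (forall a b, I (M a b)) -> M ^+ m = 0.
Proof.
move=> nilI n M IM.
suff prod_exp0 k s : (size s + k = m)%N -> all I s ->
    forall a b, \prod_(x <- s) x * (M ^+ k) a b = 0.
  apply/matrixP => a b; rewrite mxE.
  by have := prod_exp0 m [::] (erefl m) isT a b; rewrite big_nil mul1r.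
elim: k s => [|k IHk] s size_s Is a b.
  by rewrite nilI ?mul0r // -size_s addn0.
rewrite exprS -mulmxE mxE mulr_sumr big1 // => c _.
have -> : \prod_(x <- s) x * (M a c * (M ^+ k) c b)
         = \prod_(x <- rcons s (M a c)) x * (M ^+ k) c b.
  by rewrite big_rcons mulrA.
apply: IHk.
- by rewrite size_rcons addSnnS.
- by rewrite all_rcons IM.
Qed.

Lemma mulmx_exp_comm (R : nzRingType) p n (A : 'M[R]_(p, n)) X Y k :
  A *m X = Y *m A -> A *m X ^+ k = Y ^+ k *m A.
Proof.
move=> AXYA; elim: k => [|k IHk]; first by rewrite !expr0 mulmx1 mul1mx.
by rewrite !exprS -!mulmxE mulmxA AXYA -mulmxA IHk mulmxA.
Qed.

Lemma mulmx_geom_comm (R : nzRingType) p n (A : 'M[R]_(p, n)) X Y m :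
  A *m X = Y *m A ->
  A *m (\sum_(k < m) X ^+ k) = (\sum_(k < m) Y ^+ k) *m A.
Proof.
move=> AXYA; rewrite mulmx_sumr mulmx_suml.
by apply: eq_bigr => k _; apply: mulmx_exp_comm.
Qed.

Section NilpotentDefect.
Variables (R : nzRingType) (D : cx R).
Local Notation e := (cidem D).
Local Notation d := (cdiff D).
Hypothesis idem_e : forall i, e i *m e i = e i.
Hypothesis corner_d : forall i, d i = e (i + 1) *m d i *m e i.
Hypothesis dd0 : forall i, d (i + 1) *m d i = 0.
Variable h : forall i : int, 'M[R]_(cdim D i, cdim D (i + 1)).
Hypothesis corner_h : forall i, h i = e i *m h i *m e (i + 1).

Definition defect i : 'M[R]_(cdim D (i + 1)) :=
  e (i + 1) - (d i *m h i + h (i + 1) *m d (i + 1)).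

Lemma mul_idem_diff i : e (i + 1) *m d i = d i.
Proof. by rewrite {1}corner_d !mulmxA idem_e -corner_d. Qed.

Lemma mul_diff_idem i : d i *m e i = d i.
Proof. by rewrite {1}corner_d -!mulmxA idem_e !mulmxA -corner_d. Qed.

Lemma mul_idem_h i : e i *m h i = h i.
Proof. by rewrite {1}corner_h !mulmxA idem_e -corner_h. Qed.

Lemma mul_h_idem i : h i *m e (i + 1) = h i.
Proof. by rewrite {1}corner_h -!mulmxA idem_e !mulmxA -corner_h. Qed.

Lemma mul_idem_defect i : e (i + 1) *m defect i = defect i.
Proof. by rewrite mulmxBr mulmxDr idem_e !mulmxA mul_idem_diff mul_idem_h. Qed.

Lemma mul_defect_idem i : defect i *m e (i + 1) = defect i.
Proof. by rewrite mulmxBl mulmxDl idem_e -!mulmxA mul_diff_idem mul_h_idem. Qed.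

Lemma diff_defect_comm i : d (i + 1) *m defect i = defect (i + 1) *m d (i + 1).
Proof.
rewrite mulmxBr mulmxDr mulmxBl mulmxDl !mulmxA dd0 mul0mx add0r.
by rewrite -(mulmxA (h _)) dd0 mulmx0 addr0 mul_diff_idem mul_idem_diff.
Qed.

Lemma kb_zero_nilpotent_defect m :
  (forall i, defect i ^+ m = 0) -> kb_zero D.
Proof.
move=> defect_nil; pose W i := \sum_(k < m) defect i ^+ k.
have d_W i : d (i + 1) *m W i = W (i + 1) *m d (i + 1).
  exact/mulmx_geom_comm/diff_defect_comm.
have e_W i : e (i + 1) *m W i = W i *m e (i + 1).
  by apply/mulmx_geom_comm; rewrite mul_idem_defect mul_defect_idem.
have htpy_W i : (d i *m h i + h (i + 1) *m d (i + 1)) *m W i = e (i + 1).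
  have -> : d i *m h i + h (i + 1) *m d (i + 1) = e (i + 1) *m (1 - defect i).
    by rewrite mulmxBr mulmx1 mul_idem_defect /defect subKr.
  have geom : (1 - defect i) *m W i = 1 - defect i ^+ m.
    by rewrite mulmxE -opprB mulNr -subrX1 opprB.
  by rewrite -mulmxA geom defect_nil subr0 mulmx1.
exists (fun i => h i *m W i); split => i.
- by rewrite !mulmxA mul_idem_h -mulmxA -e_W mulmxA mul_h_idem.
- by rewrite /cxid /cxzero subr0 -htpy_W mulmxDl -!mulmxA d_W.
Qed.

End NilpotentDefect.

Section LiftContraction.
Variables (R S : nzRingType) (pi : {rmorphism R -> S}) (iota : {rmorphism S -> R}).
Hypothesis iotaK : cancel iota pi.
Hypothesis nil_ker : nilpotent_ideal [pred x : R | pi x == 0].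

Lemma map_mx_iotaK m n (M : 'M[S]_(m, n)) : map_mx pi (map_mx iota M) = M.
Proof. by rewrite -map_mx_comp map_mx_id. Qed.

Lemma kb_zero_of_tensor_cx (D : cx R) :
  is_bcx D -> kb_zero (tensor_cx pi D) -> kb_zero D.
Proof.
move=> [idem_e corner_d dd0 _] [h' [corner_h' htpy']] /=.
rewrite /cxid /cxzero /= in corner_h' htpy'.
pose h i := cidem D i *m map_mx iota (h' i) *m cidem D (i + 1).
have corner_h i : h i = cidem D i *m h i *m cidem D (i + 1).
  by rewrite /h !mulmxA idem_e -!mulmxA idem_e.
have pi_h i : map_mx pi (h i) = h' i.
  by rewrite /h !map_mxM map_mx_iotaK -corner_h'.
clearbody h; have [m nilm] := nil_ker.
apply: (kb_zero_nilpotent_defect idem_e corner_d dd0 corner_h (m := m)) => i.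
apply: (exp_mx_nilpotent_entries nilm) => a b /=.
have: map_mx pi (defect h i) = 0.
  by rewrite /defect map_mxB map_mxD !map_mxM !pi_h -htpy' subr0 subrr.
by move/matrixP/(_ a b); rewrite !mxE => ->.
Qed.

End LiftContraction.

Theorem mainTheorem3 (F : fieldType) (A L : falgType F)
    (pi : {lrmorphism L -> A}) (iota : {lrmorphism A -> L}) :
  split_by_nilpotent pi iota ->
  forall C : cx A, is_bcx C -> kb_indecomposable C ->
    kb_indecomposable (tensor_cx iota C).
Proof.
move=> [_ nil_ker iotaK] C bcxC [_ [nzC indecC]].
split; first exact: tensor_cx_bcx.
split.
  by move=> /(tensor_cx_kb_zero pi); rewrite tensor_cxK.
move=> D1 D2 bcxD1 bcxD2 /(tensor_cx_kb_biproduct pi).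
rewrite tensor_cxK // => /(indecC _ _ (tensor_cx_bcx pi bcxD1) (tensor_cx_bcx pi bcxD2)).
case=> [zD1 | zD2].
- by left; apply: (kb_zero_of_tensor_cx iotaK nil_ker).
- by right; apply: (kb_zero_of_tensor_cx iotaK nil_ker).
Qed.
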